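(* The map on inversion sequences given by Algorithm A (described below) is an involution: if $\epsilon$ is an inversion sequence, $\epsilon'$ is the result of applying Algorithm A to $\epsilon$, and $\epsilon''$ is the result of applying Algorithm A to $\epsilon'$, then $\epsilon''=\epsilon$.
   Context: An inversion sequence of length $n$ is an integer sequence with $0\le\epsilon_i<i$ for all $i$. The reduction of an integer word replaces each occurrence of its $k$-th smallest distinct value by $k-1$; a consecutive pattern $\underline{p_1p_2p_3p_4}$ occurs in a sequence at position $i$ if the reduction of its entries in positions $i,\dots,i+3$ equals $p_1p_2p_3p_4$. Let $p=\underline{0102}$ and $q=\underline{0112}$. Algorithm A, on input an integer sequence $\mathrm{seq}=\epsilon_1\cdots\epsilon_n$: let $E_p$, $E_q$ be the sets of positions of occurrences of $p$, resp. $q$, in the input sequence; set $\mathrm{last}:=$ null. For $i=1,2,\dots,n$ in order: let $N_p,N_q$ be the sets of positions of occurrences of $p$, resp. $q$, in the current sequence. If $i-2\in E_p$: set $\mathrm{last}:=\mathrm{seq}[i]$ and $\mathrm{seq}[i]:=\mathrm{seq}[i-1]$. Else if $i-2\in E_q$: set $\mathrm{last}:=\mathrm{seq}[i]$ and $\mathrm{seq}[i]:=\mathrm{seq}[i-2]$. Else if $i-2\in N_p$ or $i-2\in N_q$: swap the values of $\mathrm{seq}[i]$ and $\mathrm{last}$. Output $\mathrm{seq}$. *)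

From mathcomp Require Import all_boot.
Set Implicit Arguments. Unset Strict Implicit. Unset Printing Implicit Defensive.

(* Sequences are lists of naturals; positions are 1-indexed as in the paper:
   entry at position i of s is  nth 0 s i.-1 . *)

Definition is_inversion_seq (s : seq nat) : bool :=
  all (fun i => nth 0 s i.-1 < i) (iota 1 (size s)).

Definition reduction (w : seq nat) : seq nat :=
  map (fun x => count (fun y => y < x) (undup w)) w.

Definition occurs_at (p s : seq nat) (i : nat) : bool :=
  [&& 0 < i, i + 3 <= size s & reduction (take 4 (drop i.-1 s)) == p].

Definition pat_p : seq nat := [:: 0; 1; 0; 2].
Definition pat_q : seq nat := [:: 0; 1; 1; 2].

Definition occ_minus2 (p s : seq nat) (i : nat) : bool :=
  (2 < i) && occurs_at p s (i - 2).

(* One iteration (index i) of Algorithm A. [s0] is the input sequence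
   (used for E_p, E_q); the state is (current sequence, last), where
   last = None stands for "null". *)
Definition algA_step (s0 : seq nat) (st : seq nat * option nat) (i : nat)
  : seq nat * option nat :=
  let: (s, last) := st in
  if occ_minus2 pat_p s0 i then
    (set_nth 0 s i.-1 (nth 0 s (i - 2)), Some (nth 0 s i.-1))
  else if occ_minus2 pat_q s0 i then
    (set_nth 0 s i.-1 (nth 0 s (i - 3)), Some (nth 0 s i.-1))
  else if occ_minus2 pat_p s i || occ_minus2 pat_q s i then
    match last with
    | Some l => (set_nth 0 s i.-1 l, Some (nth 0 s i.-1))
    | None => (s, None) (* unreachable on any input *)
    end
  else (s, last).

Definition algorithmA (s0 : seq nat) : seq nat :=
  (foldl (algA_step s0) (s0, None) (iota 1 (size s0))).1.

(* Algorithm A only rewrites the third entry of a window x b y d with x < b < d, and only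
   in a dip: the changed entry and its new value are at most the left neighbour, which is
   itself unchanged, and below the right neighbour.  So changed positions are isolated and
   [last] always holds the original value of the most recently changed entry.  Writing x'
   for the output already produced at the first position, the window x b x d becomes
   x' b b d, the window x b b d becomes x' b x' d, and a window x b x' d (x' <> x) that
   only turns into a pattern through the change of its first entry becomes x' b x d, with
   x taken from [last].  The second pass meets these three situations with the roles of
   input and output exchanged, so it restores the entries one by one from left to right. *)

From mathcomp Require Import all_boot zify.

Set Implicit Arguments.
Unset Strict Implicit.
Unset Printing Implicit Defensive.

Definition p_shape (a b c d : nat) : bool := [&& a == c, a < b & b < d].
Definition q_shape (a b c d : nat) : bool := [&& a < b, b == c & c < d].

Definition rank (w : seq nat) (x : nat) : nat := count (fun z => z < x) (undup w).

Lemma count_lt_mono (s : seq nat) x y :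
  x \in s -> x < y -> count (fun z => z < x) s < count (fun z => z < y) s.
Proof.
move=> xs xy; have le_xy : subpred (fun z => z < x) (fun z => z < y).
  by move=> z /ltn_trans; apply.
elim: s xs => //= z s IH; rewrite inE => /orP [/eqP <-|zs].
  by rewrite ltnn xy add1n ltnS sub_count.
have := IH zs; have := @le_xy z; case: (z < x) => [/(_ isT) ->|_] /=; lia.
Qed.

Lemma ltn_rank w x y : x \in w -> y \in w -> (rank w x < rank w y) = (x < y).
Proof.
move=> xw yw; rewrite /rank; case: (ltngtP x y) => [xy|yx|<-]; last by rewrite ltnn.
- by apply: count_lt_mono; rewrite ?mem_undup.
- by apply/negbTE; rewrite -leqNgt ltnW // count_lt_mono ?mem_undup.
Qed.

Lemma eqn_rank w x y : x \in w -> y \in w -> (rank w x == rank w y) = (x == y).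
Proof.
move=> xw yw; case: (ltngtP x y) => [xy|yx|->]; rewrite ?eqxx //; apply/negbTE.
  by rewrite neq_ltn (ltn_rank xw yw) xy.
by rewrite neq_ltn (ltn_rank yw xw) yx orbT.
Qed.

Lemma reduction_p a b c d : (reduction [:: a; b; c; d] == pat_p) = p_shape a b c d.
Proof.
apply/eqP/and3P => [|[/eqP <- ab bd]].
  set w := [:: a; b; c; d].
  have [aw bw cw dw] : [/\ a \in w, b \in w, c \in w & d \in w] by rewrite !inE !eqxx ?orbT.
  have -> : reduction w = [:: rank w a; rank w b; rank w c; rank w d] by [].
  move=> [ra rb rc rd]; split.
  - by rewrite -(eqn_rank aw cw) ra rc.
  - by rewrite -(ltn_rank aw bw) ra rb.
  - by rewrite -(ltn_rank bw dw) rb rd.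
have [ba da db] : [/\ b == a = false, d == a = false & d == b = false] by split; apply/negbTE/eqP; lia.
rewrite /reduction /= !inE !eqxx ?ba ?da ?db ![a == _]eq_sym ?ba ?da ![b == _]eq_sym ?db /=.
have [-> -> ->] : [/\ b < a = false, d < a = false & d < b = false].
  by split; apply/negbTE; lia.
by rewrite !ltnn ab bd (ltn_trans ab bd).
Qed.

Lemma reduction_q a b c d : (reduction [:: a; b; c; d] == pat_q) = q_shape a b c d.
Proof.
apply/eqP/and3P => [|[ab /eqP <- bd]].
  set w := [:: a; b; c; d].
  have [aw bw cw dw] : [/\ a \in w, b \in w, c \in w & d \in w] by rewrite !inE !eqxx ?orbT.
  have -> : reduction w = [:: rank w a; rank w b; rank w c; rank w d] by [].
  move=> [ra rb rc rd]; split.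
  - by rewrite -(ltn_rank aw bw) ra rb.
  - by rewrite -(eqn_rank bw cw) rb rc.
  - by rewrite -(ltn_rank cw dw) rc rd.
have [ba da db] : [/\ b == a = false, d == a = false & d == b = false] by split; apply/negbTE/eqP; lia.
rewrite /reduction /= !inE !eqxx ?ba ?da ?db ![a == _]eq_sym ?ba ?da ![b == _]eq_sym ?db /=.
have [-> -> ->] : [/\ b < a = false, d < a = false & d < b = false].
  by split; apply/negbTE; lia.
by rewrite !ltnn ab bd (ltn_trans ab bd).
Qed.

Definition pattern (a b c d : nat) : bool := p_shape a b c d || q_shape a b c d.

(* Iteration t.+1 of Algorithm A on a full window: [x b y d] are the input entries at
   positions t-2 .. t+1 (0-indexed), [x' b'] the output entries already written at t-2 and
   t-1.  The result is the output entry at t and the new value of [last]. *)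
Definition window_step (x b y d x' b' : nat) (last : option nat) : nat * option nat :=
  if p_shape x b y d then (b', Some y)
  else if q_shape x b y d then (x', Some y)
  else if pattern x' b' y d then
    if last is Some l then (l, Some y) else (y, None)
  else (y, last).

Section Window.

Variables x b y d x' b' : nat.
Hypothesis kept_b : b' = b \/ x' = x /\ b <= x /\ b' <= x.
Hypothesis kept_x : x' = x \/ x < b /\ x' < b.

Lemma window_pattern_moved :
  pattern x' b' y d -> ~~ pattern x b y d -> [/\ b' = b, x' <> x, y = x' & x' < b < d].
Proof. rewrite /pattern /p_shape /q_shape => ? ?; split; lia. Qed.

Lemma window_step_cases {la y' la'} :
  (pattern x' b' y d -> ~~ pattern x b y d -> la = Some x) ->
  window_step x b y d x' b' la = (y', la') ->
  y' = y /\ la' = la \/ [/\ y' <> y, b' = b, y <= b < d, y' <= b & la' = Some y].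
Proof.
move=> last_x; rewrite /window_step.
case: ifP => P; [|case: ifP => Q; [|case: ifP => C]]; last by case=> -> ->; left.
- by case=> <- <-; right; split=> //; move: P; rewrite /p_shape; lia.
- by case=> <- <-; right; split=> //; move: P Q; rewrite /p_shape /q_shape; lia.
have notC : ~~ pattern x b y d by rewrite /pattern P Q.
have [-> ? -> ?] := window_pattern_moved C notC.
by rewrite last_x // => -[<- <-]; right; split=> //; lia.
Qed.

Lemma window_step_involutive {y' d' la la' lb} :
  d' = d \/ y' = y /\ d <= y /\ d' <= y ->
  (pattern x' b' y d -> ~~ pattern x b y d -> la = Some x) ->
  (pattern x b y' d' -> ~~ pattern x' b' y' d' -> lb = Some x') ->
  window_step x b y d x' b' la = (y', la') ->
  (window_step x' b' y' d' x b lb).1 = y.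
Proof.
move=> kept_d last_x last_x'; rewrite {1}/window_step.
case: ifP => P; [|case: ifP => Q; [|case: ifP => C]].
- case=> <- _; move: P; rewrite /window_step /p_shape /q_shape /=.
  case: ifP => P2; [|case: ifP => Q2]; move: P2 => /=; lia.
- case=> <- _; move: P Q; rewrite /window_step /p_shape /q_shape /=.
  case: ifP => P2; move: P2 => /=; lia.
- have notC : ~~ pattern x b y d by rewrite /pattern P Q.
  have [eb nx yx bd] := window_pattern_moved C notC.
  rewrite last_x // => -[? _]; subst y'; rewrite /window_step.
  have [P2 Q2] : p_shape x' b' x d' = false /\ q_shape x' b' x d' = false.
    by rewrite /p_shape /q_shape; split; lia.
  have pat : pattern x b x d' by rewrite /pattern /p_shape; lia.
  by rewrite P2 Q2 pat (last_x' pat) // /pattern P2 Q2.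
- case=> <- _; rewrite /window_step.
  have [-> ->] : p_shape x' b' y d' = false /\ q_shape x' b' y d' = false.
    by move: C; rewrite /pattern /p_shape /q_shape; split; lia.
  suff -> : pattern x b y d' = false by [].
  by move: P Q; rewrite /pattern /p_shape /q_shape; lia.
Qed.

End Window.

(* A run of Algorithm A with input U and output V, where [A t] is the value of [last]
   before position t is processed. *)
Definition run_step (U V : nat -> nat) (A : nat -> option nat) (n t : nat) : Prop :=
  (V t, A t.+1) =
  if (1 < t) && (t.+2 <= n)
  then window_step (U t.-2) (U t.-1) (U t) (U t.+1) (V t.-2) (V t.-1) (A t)
  else (U t, A t).

Definition kept_or_dip (U V : nat -> nat) (j : nat) : Prop :=
  V j = U j \/ [/\ V j.-1 = U j.-1, U j <= U j.-1 < U j.+1 & V j <= U j.-1].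

Fixpoint last_change (U V : nat -> nat) (t : nat) : option nat :=
  if t is s.+1 then if V s == U s then last_change U V s else Some s else None.

Section Run.

Variables (U V : nat -> nat) (A : nat -> option nat) (n : nat).
Hypothesis A0 : A 0 = None.
Hypothesis run : forall t, t < n -> run_step U V A n t.

Definition run_inv (t : nat) : Prop :=
  (forall j, j < t -> kept_or_dip U V j) /\ A t = omap U (last_change U V t).

Lemma kept_or_dip_window m : (forall j, j < m.+2 -> kept_or_dip U V j) ->
  (V m.+1 = U m.+1 \/ V m = U m /\ U m.+1 <= U m /\ V m.+1 <= U m) /\
  (V m = U m \/ U m < U m.+1 /\ V m < U m.+1).
Proof.
move=> kept; have := kept m.+1 (ltnSn _); have := kept m (ltnW (ltnSn _)).
rewrite /kept_or_dip /= => -[?|[? ? ?]] [?|[? ? ?]]; lia.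
Qed.

Lemma last_of_new_pattern m : run_inv m.+2 ->
  pattern (V m) (V m.+1) (U m.+2) (U m.+3) -> ~~ pattern (U m) (U m.+1) (U m.+2) (U m.+3) ->
  A m.+2 = Some (U m).
Proof.
move=> [/kept_or_dip_window [kb kx] ->] C notC.
have [eb nx _ _] := window_pattern_moved kb kx C notC.
by rewrite /= eb eqxx (introF eqP nx).
Qed.

Lemma run_step_cases t : t < n -> run_inv t ->
  V t = U t /\ A t.+1 = A t \/
  [/\ V t <> U t, kept_or_dip U V t & A t.+1 = Some (U t)].
Proof.
move=> lt_tn inv; have := run lt_tn; rewrite /run_step.
case: ifP => [/andP [t_gt1 tn]|_ [-> ->]]; last by left.
have [m def_t] : exists m, t = m.+2 by exists t.-2; lia.
subst t => /esym E.
have [kb kx] := kept_or_dip_window (proj1 inv).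
have := window_step_cases kb kx (last_of_new_pattern inv) E.
case=> [|[ne eb ? ? ->]]; first by left.
by right; split=> //; right; split=> //=; lia.
Qed.

Lemma run_invariant t : t <= n -> run_inv t.
Proof.
elim: t => [|t IH] lt_tn; first by split=> // j.
have [kept lastA] := IH (ltnW lt_tn).
rewrite /run_inv; have [[e ->]|[ne kt ->]] := run_step_cases lt_tn (IH (ltnW lt_tn)).
- split=> [j|]; last by rewrite /= e eqxx.
  by rewrite ltnS leq_eqVlt => /orP [/eqP ->|/kept]; [left|].
- split=> [j|]; last by rewrite /= (introF eqP ne).
  by rewrite ltnS leq_eqVlt => /orP [/eqP ->|/kept].
Qed.

End Run.

Section TwoRuns.

Variables (X Y Z : nat -> nat) (A B : nat -> option nat) (n : nat).
Hypotheses (A0 : A 0 = None) (B0 : B 0 = None).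
Hypothesis runXY : forall t, t < n -> run_step X Y A n t.
Hypothesis runYZ : forall t, t < n -> run_step Y Z B n t.

Lemma run_runK t : t < n -> Z t = X t.
Proof.
elim/ltn_ind: t => t IH lt_tn.
have := runXY lt_tn; have := runYZ lt_tn; rewrite /run_step.
case: ifP => [/andP [t_gt1 tn]|_]; last by case=> -> _ [-> _].
have [m def_t] : exists m, t = m.+2 by exists t.-2; lia.
subst t => /(congr1 fst) /= -> /esym E.
have [Zm Zm1] : Z m = X m /\ Z m.+1 = X m.+1 by split; apply: IH; lia.
have invXY : run_inv X Y A m.+2 by apply: (run_invariant A0 runXY); lia.
have invYZ : run_inv Y Z B m.+2 by apply: (run_invariant B0 runYZ); lia.
have [kb kx] := kept_or_dip_window (proj1 invXY).
have kd : Y m.+3 = X m.+3 \/ Y m.+2 = X m.+2 /\ X m.+3 <= X m.+2 /\ Y m.+3 <= X m.+2.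
  have [kXY _] := run_invariant A0 runXY (leqnn n).
  by case: (kXY m.+3 tn) => [|[/= ? /andP [? _] ?]]; [left|right].
have last_x' := last_of_new_pattern invYZ; rewrite Zm Zm1 in last_x' *.
exact: (window_step_involutive kb kx kd (last_of_new_pattern invXY) last_x' E).
Qed.

End TwoRuns.

Definition trace (u : seq nat) (t : nat) : seq nat * option nat :=
  foldl (algA_step u) (u, None) (iota 1 t).

Lemma trace_succ u t : trace u t.+1 = algA_step u (trace u t) t.+1.
Proof. by rewrite /trace -[t.+1]addn1 iotaD foldl_cat add1n addn1. Qed.

Lemma nth_algA_step u st i j :
  j != i.-1 -> nth 0 (algA_step u st i).1 j = nth 0 st.1 j.
Proof.
case: st => s l ne_j; rewrite /algA_step.
have nth_set v : nth 0 (set_nth 0 s i.-1 v) j = nth 0 s j by rewrite nth_set_nth /= (negbTE ne_j).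
case: ifP => _; first exact: nth_set.
case: ifP => _; first exact: nth_set.
by case: ifP => _ //; case: l => //= v; apply: nth_set.
Qed.

Lemma size_algA_step u st i :
  i.-1 < size st.1 -> size (algA_step u st i).1 = size st.1.
Proof.
case: st => s l /= lt_is; rewrite /algA_step.
have size_set v : size (set_nth 0 s i.-1 v) = size s by rewrite size_set_nth; apply/maxn_idPr.
case: ifP => _; first exact: size_set.
case: ifP => _; first exact: size_set.
by case: ifP => _ //; case: l => //= v; apply: size_set.
Qed.

Lemma size_trace u t : t <= size u -> size (trace u t).1 = size u.
Proof.
elim: t => // t IH lt_tu; rewrite trace_succ size_algA_step IH //; exact: ltnW.
Qed.

Lemma nth_trace_future u t j : t <= j -> nth 0 (trace u t).1 j = nth 0 u j.
Proof.
elim: t => // t IH lt_tj; rewrite trace_succ nth_algA_step ?IH ?(ltnW lt_tj) //.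
by rewrite neq_ltn lt_tj orbT.
Qed.

Lemma nth_trace_past u t t' j : j < t <= t' -> nth 0 (trace u t').1 j = nth 0 (trace u t).1 j.
Proof.
move=> /andP [lt_jt]; elim: t' => [|t' IH]; first by rewrite leqn0 => /eqP ->.
rewrite leq_eqVlt => /orP [/eqP -> //|lt_tt'].
by rewrite trace_succ nth_algA_step ?IH //; apply/eqP; lia.
Qed.

Lemma occ_minus2_window p s t :
  occ_minus2 p s t.+1 =
  [&& 1 < t, t.+2 <= size s & reduction [:: nth 0 s t.-2; nth 0 s t.-1; nth 0 s t; nth 0 s t.+1] == p].
Proof.
rewrite /occ_minus2 /occurs_at ltnS; case: t => [|[|m]] //=.
have -> : m.+3 - 2 + 3 = m.+4 by lia.
by case: ltnP => // lt_ms; rewrite -(map_nth_iota 0) //; lia.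
Qed.

Lemma algorithmA_run_step u t : t < size u ->
  run_step (nth 0 u) (nth 0 (algorithmA u)) (fun t => (trace u t).2) (size u) t.
Proof.
move=> lt_tu.
have out_past j : j < t -> nth 0 (algorithmA u) j = nth 0 (trace u t).1 j.
  by move=> lt_jt; apply: nth_trace_past; rewrite lt_jt ltnW.
have out_t : nth 0 (algorithmA u) t = nth 0 (trace u t.+1).1 t by apply: nth_trace_past; rewrite ltnSn.
have size_s := size_trace (ltnW lt_tu); have fut := @nth_trace_future u t.
rewrite /run_step out_t trace_succ; case: ifP => [/andP [t_gt1 tn]|not_win]; last first.
  move: (trace u t) size_s fut => [s l] /= size_s fut.
  by rewrite /algA_step !occ_minus2_window size_s !andbA not_win /= fut.
rewrite !out_past; try lia.
move: (trace u t) size_s fut => [s l] /= size_s fut.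
rewrite /algA_step !occ_minus2_window size_s t_gt1 tn (fut t) ?(fut t.+1) //= !reduction_p !reduction_q.
have -> : t.+1 - 2 = t.-1 by lia.
have -> : t.+1 - 3 = t.-2 by lia.
rewrite /window_step /pattern.
case: ifP => _; first by rewrite nth_set_nth /= eqxx.
case: ifP => _; first by rewrite nth_set_nth /= eqxx.
case: ifP => _; last by rewrite fut.
by case: l => [v|] /=; rewrite ?nth_set_nth /= ?eqxx ?fut.
Qed.

Theorem theorem4 (e : seq nat) :
  is_inversion_seq e -> algorithmA (algorithmA e) = e.
Proof.
move=> _; set y := algorithmA e.
have size_y : size y = size e := size_trace (leqnn _).
have size_z : size (algorithmA y) = size y := size_trace (leqnn _).
apply: (@eq_from_nth _ 0) => [|i]; rewrite size_z size_y // => lt_ie.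
apply: (@run_runK _ _ _ (fun t => (trace e t).2) (fun t => (trace y t).2) (size e)) => // t lt_te.
  exact: algorithmA_run_step.
by rewrite -size_y; apply: algorithmA_run_step; rewrite size_y.
Qed.
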